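(* Let $F$ be a generalised clause-set, and let a generic translation $(T,\gamma)$ of $F$ be given. Then the boolean clause-set $T_\gamma(F)$ is satisfiable if and only if $F$ is satisfiable.
   Context: A generalised clause-set $F$ is a finite set of clauses over variables $v$, each with a finite non-empty domain $D_v$; a clause is a finite set of literals of the form ''$v\ne\varepsilon$'' with $\varepsilon\in D_v$; $\mathrm{var}(F)$ is the set of variables occurring in $F$. An assignment $\varphi$ maps each $v\in\mathrm{var}(F)$ to a value in $D_v$; it satisfies the literal ''$v\ne\varepsilon$'' if $\varphi(v)\ne\varepsilon$, a clause if it satisfies some literal of it, and $F$ if it satisfies every clause. Boolean clauses are finite sets of boolean literals (variables or their negations), satisfied by a boolean assignment if some literal is true; a boolean clause-set is satisfiable if some assignment satisfies all its clauses. A generic translation of $F$ consists of: for each $v\in\mathrm{var}(F)$ an unsatisfiable boolean clause-set $T(v)$, such that $T(v),T(w)$ have no variables in common for $v\ne w$; and for each $v$ an injective map $\gamma_v:D_v\to T(v)$ such that for every $\varepsilon\in D_v$ the clause-set $T(v)\setminus\{\gamma_v(\varepsilon)\}$ is satisfiable. Then $T_\gamma(F)$ consists of, for each clause $C\in F$, the boolean clause $\bigcup_{(v\ne\varepsilon)\in C}\gamma_v(\varepsilon)$, together with, for each $v\in\mathrm{var}(F)$, all clauses of $T(v)\setminus\{\gamma_v(\varepsilon):\varepsilon\in D_v\}$. *)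

From mathcomp Require Import all_boot.
From mathcomp Require Import finmap.
Set Implicit Arguments. Unset Strict Implicit. Unset Printing Implicit Defensive.
Local Open Scope fset_scope.

(** The literal "v <> e" is the pair [(v, e)]. *)
Definition glit (V E : choiceType) := (V * E)%type.
Definition gclause (V E : choiceType) := {fset glit V E}.
Definition gclauseset (V E : choiceType) := {fset gclause V E}.

Definition gvar (V E : choiceType) (F : gclauseset V E) : {fset V} :=
  [fset l.1 | l in \bigcup_(C <- F) C].

Definition gwf (V E : choiceType) (D : V -> {fset E}) (F : gclauseset V E) :=
  forall C, C \in F -> forall l, l \in C -> l.2 \in D l.1.

(** An assignment maps each v in var(F) to a value in D_v (we use a total
    function, constrained on var(F); its values outside var(F) are irrelevant). *)
Definition gsat (V E : choiceType) (D : V -> {fset E}) (F : gclauseset V E) :=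
  exists phi : V -> E,
    (forall v, v \in gvar F -> phi v \in D v) /\
    (forall C, C \in F -> exists2 l, l \in C & phi l.1 != l.2).

(** * Boolean clause-sets over boolean variables in a choiceType [B];
    the literal [(x, true)] is x, [(x, false)] is its negation. *)
Definition blit (B : choiceType) := (B * bool)%type.
Definition bclause (B : choiceType) := {fset blit B}.
Definition bclauseset (B : choiceType) := {fset bclause B}.

Definition bvar (B : choiceType) (G : bclauseset B) : {fset B} :=
  [fset l.1 | l in \bigcup_(C <- G) C].

Definition bsat (B : choiceType) (G : bclauseset B) :=
  exists beta : B -> bool, forall C, C \in G -> exists2 l, l \in C & beta l.1 == l.2.

Definition generic_translation (V E B : choiceType) (D : V -> {fset E})
    (F : gclauseset V E) (T : V -> bclauseset B) (gamma : V -> E -> bclause B) :=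
  [/\ (forall v, v \in gvar F -> ~ bsat (T v)),
      (forall v w, v \in gvar F -> w \in gvar F -> v != w ->
          [disjoint bvar (T v) & bvar (T w)]),
      (forall v, v \in gvar F -> {in D v &, injective (gamma v)}),
      (forall v e, v \in gvar F -> e \in D v -> gamma v e \in T v) &
      (forall v e, v \in gvar F -> e \in D v -> bsat (T v `\ gamma v e))].

Definition translate (V E B : choiceType) (D : V -> {fset E})
    (F : gclauseset V E) (T : V -> bclauseset B) (gamma : V -> E -> bclause B)
    : bclauseset B :=
  [fset (\bigcup_(l <- C) gamma l.1 l.2) | C : gclause V E in F]
  `|` \bigcup_(v <- gvar F) (T v `\` [fset gamma v e | e in D v]).

From mathcomp Require Import all_boot.
From mathcomp Require Import finmap.
Set Implicit Arguments.
Unset Strict Implicit.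
Unset Printing Implicit Defensive.
Local Open Scope fset_scope.

(* If beta satisfies T_gamma(F), then for each variable v the clause-set T(v)
   is falsified by beta, and only in a clause gamma_v(e) since all other
   clauses of T(v) belong to T_gamma(F); the values e so found give a
   solution of F.  Conversely, from a solution phi of F one satisfies each
   T(v) \ {gamma_v(phi v)} separately and glues these assignments along the
   disjoint variable sets; every clause of T_gamma(F) contains a clause of
   one of these sets, by injectivity of gamma_v. *)

Lemma mem_fst_bigfcup (K A : choiceType) (S : {fset {fset (K * A)%type}}) X l :
  X \in S -> l \in X -> l.1 \in [fset x.1 | x in \bigcup_(Y <- S) Y].
Proof.
move=> SX Xl; apply/imfsetP; exists l => //=.
by apply/bigfcupP; exists X; rewrite ?SX.
Qed.

Section BooleanClauseSets.
Variable B : choiceType.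
Implicit Types (G H : bclauseset B) (C : bclause B) (beta : B -> bool).

Definition satisfies beta G :=
  forall C, C \in G -> exists2 l, l \in C & beta l.1 == l.2.

Definition falsifies beta C := all (fun l : blit B => beta l.1 != l.2) C.

Lemma mem_bvar G C l : C \in G -> l \in C -> l.1 \in bvar G.
Proof. exact: mem_fst_bigfcup. Qed.

Lemma bvarP G x :
  reflect (exists2 C, C \in G & exists2 l, l \in C & l.1 = x) (x \in bvar G).
Proof.
apply: (iffP idP) => [/imfsetP[l /bigfcupP[C /andP[GC _] Cl] ->]|[C GC [l Cl <-]]].
  by exists C => //; exists l.
exact: mem_bvar GC Cl.
Qed.

Lemma bvarS G H : G `<=` H -> bvar G `<=` bvar H.
Proof.
move=> /fsubsetP GH; apply/fsubsetP => x /bvarP[C GC [l Cl <-]].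
exact: mem_bvar (GH _ GC) Cl.
Qed.

Lemma not_bsat_falsifies beta G :
  ~ bsat G -> exists2 C, C \in G & falsifies beta C.
Proof.
move=> unsatG; have [/hasP[C GC falsC]|/hasPn allsat] := boolP (has (falsifies beta) G).
  by exists C.
case: unsatG; exists beta => C /allsat /allPn[l Cl].
by rewrite negbK; exists l.
Qed.

Lemma bsat_subsumed G H :
  (forall C, C \in H -> exists2 C', C' \in G & C' `<=` C) -> bsat G -> bsat H.
Proof.
move=> subsH [beta satG]; exists beta => C /subsH[C' GC' /fsubsetP sC'C].
by have [l C'l betal] := satG C' GC'; exists l; rewrite ?sC'C.
Qed.

Lemma bsat_fsetU G H :
  [disjoint bvar G & bvar H] -> bsat G -> bsat H -> bsat (G `|` H).
Proof.
move=> /fdisjointP disjGH [betaG satG] [betaH satH].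
exists (fun x => if x \in bvar G then betaG x else betaH x).
move=> C; rewrite in_fsetU => /orP[GC|HC].
  have [l Cl betal] := satG C GC; exists l => //.
  by rewrite (mem_bvar GC Cl).
have [l Cl betal] := satH C HC; exists l => //.
have /negPf -> // : l.1 \notin bvar G.
by apply: contraL (mem_bvar HC Cl) => /disjGH.
Qed.

Lemma disjoint_bvar_bigfcup (I : eqType) G (H : I -> bclauseset B) (s : seq I) :
  (forall j, j \in s -> [disjoint bvar G & bvar (H j)]) ->
  [disjoint bvar G & bvar (\bigcup_(j <- s) H j)].
Proof.
move=> disjGH; apply/fdisjointP => x Gx; apply/bvarP => -[C /bigfcupP[j /andP[sj _] HC]].
move=> [l Cl lx]; move/fdisjointP: (disjGH j sj) => /(_ x Gx)/negP; apply.
by rewrite -lx (mem_bvar HC Cl).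
Qed.

Lemma bsat_bigfcup (I : eqType) (G : I -> bclauseset B) (s : seq I) :
  uniq s -> (forall i, i \in s -> bsat (G i)) ->
  {in s &, forall i j, i != j -> [disjoint bvar (G i) & bvar (G j)]} ->
  bsat (\bigcup_(i <- s) G i).
Proof.
elim: s => [|i s IHs] /=; first by move=> *; exists (fun=> false) => C; rewrite big_nil.
move=> /andP[si uniq_s] satG disjG; rewrite big_cons.
apply: bsat_fsetU; last 1 first.
- by apply: IHs => // [j sj|j k sj sk]; [apply: satG | apply: disjG]; rewrite inE ?sj ?sk orbT.
- apply: disjoint_bvar_bigfcup => j sj; apply: disjG; rewrite ?inE ?eqxx ?sj ?orbT //.
  by apply: contraNneq si => ->.
- by apply: satG; rewrite inE eqxx.
Qed.

End BooleanClauseSets.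

Section GenericTranslation.
Variables (V E B : choiceType) (D : V -> {fset E}) (F : gclauseset V E).
Variables (T : V -> bclauseset B) (gamma : V -> E -> bclause B).
Hypothesis gammaT : generic_translation D F T gamma.

Local Notation TF := (translate D F T gamma).

Lemma mem_gvar C l : C \in F -> l \in C -> l.1 \in gvar F.
Proof. exact: mem_fst_bigfcup. Qed.

Lemma translate_clause C :
  C \in F -> \bigcup_(l <- C) gamma l.1 l.2 \in TF.
Proof. by move=> FC; rewrite in_fsetU in_imfset. Qed.

Lemma translate_residue v C :
  v \in gvar F -> C \in T v -> C \notin [fset gamma v e | e in D v] -> C \in TF.
Proof.
move=> vF TC notgammaC; rewrite in_fsetU; apply/orP; right.
by apply/bigfcupP; exists v; rewrite ?vF // in_fsetD notgammaC.
Qed.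

Lemma satisfies_translate_falsifies (beta : B -> bool) v :
  satisfies beta TF -> v \in gvar F ->
  exists2 e, e \in D v & falsifies beta (gamma v e).
Proof.
case: gammaT => unsatT _ _ _ _ satTF vF.
have [C TC falsC] := not_bsat_falsifies beta (unsatT v vF).
have [/imfsetP[e /= De Ce]|notgammaC] := boolP (C \in [fset gamma v e | e in D v]).
  by exists e; rewrite // -Ce.
have [l Cl /eqP betal] := satTF C (translate_residue vF TC notgammaC).
by move: falsC => /allP/(_ l Cl); rewrite betal eqxx.
Qed.

Lemma gsat_translate : (forall v, D v != fset0) -> bsat TF -> gsat D F.
Proof.
move=> nonemptyD [beta satTF].
have pick v : exists e, (v \in gvar F) ==> (e \in D v) && falsifies beta (gamma v e).
  have [vF|_] := boolP (v \in gvar F); last by have /fset0Pn[e _] := nonemptyD v; exists e.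
  by have [e De falsif] := satisfies_translate_falsifies satTF vF; exists e; rewrite De.
pose phi v := xchoose (pick v).
have phiP v : v \in gvar F -> phi v \in D v /\ falsifies beta (gamma v (phi v)).
  by move=> vF; have /implyP/(_ vF)/andP := xchooseP (pick v).
exists phi; split=> [v /phiP[] // | C FC].
have [b /bigfcupP[l /andP[Cl _] lb] betab] := satTF _ (translate_clause FC).
exists l => //; apply/eqP => phil.
have [_ /allP/(_ b)] := phiP _ (mem_gvar FC Cl).
by rewrite phil betab => /(_ lb).
Qed.

Lemma bsat_translate : gwf D F -> gsat D F -> bsat TF.
Proof.
case: gammaT => _ disjT injgamma gammaT_mem satT wfF [phi [phiD satF]].
pose R v := T v `\ gamma v (phi v).
have satR : bsat (\bigcup_(v <- gvar F) R v).
  apply: bsat_bigfcup (fset_uniq _) _ _ => [v vF | v w vF wF vw].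
    exact: satT (phiD v vF).
  rewrite /R; apply: (fdisjointWl (bvarS (fsubD1set _ _))).
  exact: (fdisjointWr (bvarS (fsubD1set _ _))) (disjT v w vF wF vw).
apply: bsat_subsumed satR => C.
rewrite in_fsetU => /orP[/imfsetP[C0 /= FC0 ->]|/bigfcupP[v /andP[vF _]]].
- have [l C0l phil] := satF C0 FC0.
  have lF := mem_gvar FC0 C0l; have Dl := wfF C0 FC0 l C0l.
  exists (gamma l.1 l.2).
    apply/bigfcupP; exists l.1; rewrite ?lF // in_fsetD1 gammaT_mem // andbT.
    by apply: contra phil => /eqP/(injgamma _ lF _ _ Dl (phiD _ lF)) ->.
  by apply: (bigfcup_sup _ C0l).
- rewrite in_fsetD => /andP[notgammaC TC]; exists C => //.
  apply/bigfcupP; exists v; rewrite ?vF // in_fsetD1 TC andbT.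
  by apply: contraNneq notgammaC => ->; rewrite in_imfset ?phiD.
Qed.

End GenericTranslation.

Theorem lemma5 (V E B : choiceType) (D : V -> {fset E}) (F : gclauseset V E)
    (T : V -> bclauseset B) (gamma : V -> E -> bclause B) :
  (forall v, D v != fset0) ->
  gwf D F ->
  generic_translation D F T gamma ->
  (bsat (translate D F T gamma) <-> gsat D F).
Proof.
move=> nonemptyD wfF gammaT; split.
- exact: gsat_translate.
- exact: bsat_translate.
Qed.
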